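(* Let $G$ and $\ell$ be as in the construction described in the context. If $G$ has an acyclic matching of size at least $\ell$, then for some $q\in[t]$ the instance $(X,\mathcal{S}_q)$ of \textsc{Exact-3-Cover} is a Yes-instance.
   Context: Construction. Let $n=3c$ with $c\in\mathbb{N}$, $X=[n]$, and let $(X,\mathcal{S}_1),\dots,(X,\mathcal{S}_t)$ be instances of \textsc{Exact-3-Cover} (each $\mathcal{S}_i$ a collection of 3-element subsets of $X$, all $\mathcal{S}_i$ of the same size $m$ and pairwise distinct as collections). An instance $(X,\mathcal{S})$ is a Yes-instance if some subcollection of $\mathcal{S}$ covers every element of $X$ exactly once. Let $\mathcal{C}=\bigcup_{i\in[t]}\mathcal{S}_i=\{s_1,\dots,s_{|\mathcal{C}|}\}$ (distinct 3-sets). The graph $G$: a vertex set $X'=\{v_a:a\in X\}$; for each $s_j=\{a,b,c\}\in\mathcal{C}$ a set gadget $Q_j$ with vertices $u_{ja},u_{jb},u_{jc}$ (interface vertices), $u_j,w_j,u_j',w_j'$, where each of $u_j,w_j$ is adjacent to each of $u_{ja},u_{jb},u_{jc}$, and additionally $u_jw_j,u_ju_j',w_jw_j'$ are edges; for each $s_j\in\mathcal{C}$ and $d\in s_j$ the edge $u_{jd}v_d$ (cross edges); a vertex $p$ and vertices $P=\{p_1,\dots,p_t\}$ with edges $pp_i$ for all $i$; and for each $i\in[t]$ and each $s_j\in\mathcal{C}\setminus\mathcal{S}_i$, edges from $p_i$ to the three interface vertices of $Q_j$. There are no other edges. Set $\ell=2|\mathcal{C}|+\frac{2n}{3}+1$.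 A matching $M$ is acyclic if the subgraph induced by the endpoints of its edges is a forest. *)

From HB Require Import structures.
From mathcomp Require Import all_boot.

Set Implicit Arguments.
Unset Strict Implicit.
Unset Printing Implicit Defensive.

Definition is_matching (T : finType) (adj : rel T) (M : {set {set T}}) : Prop :=
  (forall e, e \in M -> exists x y, adj x y /\ e = [set x; y]) /\
  (forall e1 e2, e1 \in M -> e2 \in M -> e1 != e2 -> [disjoint e1 & e2]).

Definition induced_forest (T : finType) (adj : rel T) (A : {set T}) : Prop :=
  ~ exists p : seq T, [/\ 2 < size p, uniq p, all (mem A) p & cycle adj p].

Definition acyclic_matching (T : finType) (adj : rel T) (M : {set {set T}}) : Prop :=
  is_matching adj M /\ induced_forest adj (cover M).

(* Exact-3-Cover.  X = 'I_n (standing for [n]); an instance is a       *)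

Definition three_sets (n : nat) (S : {set {set 'I_n}}) : Prop :=
  forall s, s \in S -> #|s| = 3.

Definition x3c_yes (n : nat) (S : {set {set 'I_n}}) : Prop :=
  exists S' : {set {set 'I_n}}, S' \subset S /\
    forall a : 'I_n, #|[set s in S' | a \in s]| = 1.

Definition bigC (n t : nat) (S : 'I_t -> {set {set 'I_n}}) : {set {set 'I_n}} :=
  \bigcup_(i < t) S i.

(* index set of the gadgets: the sets s_j of C *)
Definition csub (n : nat) (C : {set {set 'I_n}}) := {s : {set 'I_n} | s \in C}.
(* index set of the interface vertices u_{jd}: pairs (s_j, d) with d in s_j *)
Definition iface (n : nat) (C : {set {set 'I_n}}) :=
  {p : csub C * 'I_n | p.2 \in val p.1}.

Inductive vert (n t : nat) (C : {set {set 'I_n}}) : Type :=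
| VX  of 'I_n
| VI  of iface C
| VU  of csub C
| VW  of csub C
| VU' of csub C
| VW' of csub C
| VP
| VPi of 'I_t.

Section VertFin.
Variables (n t : nat) (C : {set {set 'I_n}}).

Definition vcode (v : vert t C) :
    ('I_n + iface C) + (csub C * 'I_4) + option 'I_t :=
  match v with
  | VX a => inl (inl (inl a))
  | VI x => inl (inl (inr x))
  | VU s => inl (inr (s, inord 0))
  | VW s => inl (inr (s, inord 1))
  | VU' s => inl (inr (s, inord 2))
  | VW' s => inl (inr (s, inord 3))
  | VP => inr None
  | VPi i => inr (Some i)
  end.

Definition vdecode (x : ('I_n + iface C) + (csub C * 'I_4) + option 'I_t)
    : vert t C :=
  match x with
  | inl (inl (inl a)) => @VX n t C a
  | inl (inl (inr x)) => @VI n t C x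
  | inl (inr (s, k)) =>
      match val k with 0 => @VU n t C s | 1 => @VW n t C s | 2 => @VU' n t C s | _ => @VW' n t C s end
  | inr None => @VP n t C
  | inr (Some i) => @VPi n t C i
  end.

Lemma vcodeK : cancel vcode vdecode.
Proof. by case=> //= s; rewrite inordK. Qed.

HB.instance Definition _ := Finite.copy (vert t C) (can_type vcodeK).
End VertFin.

(* The (directed, one orientation per edge) edge list of G. *)
Definition G_edge0 (n t : nat) (S : 'I_t -> {set {set 'I_n}})
    (x y : vert t (bigC S)) : bool :=
  match x, y with
  | VU s, VI z => (val z).1 == s
  | VW s, VI z => (val z).1 == s
  | VU s, VW s' => s == s'
  | VU s, VU' s' => s == s'
  | VW s, VW' s' => s == s'
  | VI z, VX a => (val z).2 == a
  | VP, VPi _ => true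
  | VPi i, VI z => val (val z).1 \notin S i
  | _, _ => false
  end.

Definition G_adj (n t : nat) (S : 'I_t -> {set {set 'I_n}}) : rel (vert t (bigC S)) :=
  fun x y => G_edge0 x y || G_edge0 y x.

(* ell = 2|C| + 2n/3 + 1, with n = 3c *)
Definition ell (c t : nat) (S : 'I_t -> {set {set 'I_(3 * c)}}) : nat :=
  2 * #|bigC S| + 2 * c + 1.

Arguments G_adj {n t} S.
Arguments ell {c t} S.
Arguments bigC {n t} S.

From HB Require Import structures.
From mathcomp Require Import all_boot zify.

(* Every edge of the acyclic matching M lies at u_j or w_j, is a cross edge u_jd v_d, joins
   some p_i to an interface vertex u_jd, or contains p. Since the endpoints of M induce a forest,
   no triangle and no 4-cycle of G is covered; as u_j, w_j and every p_i with s_j \notin S_i are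
   common neighbours of the interface vertices of Q_j, a gadget with k cross edges carries at
   most 2 + 2k/3 edges of M, with equality only if k = 0, or k = 3 and u_j or w_j is matched.
   The cross edges match distinct v_a, so summing gives |M| <= 2|C| + 2n/3 + 1, and equality
   forces every gadget to be balanced in this sense, p to be matched to some p_q and every v_a
   to be matched by a cross edge. The sets s_j with three cross edges then cover X exactly, and
   they all lie in S_q: otherwise p_q, u_j (or w_j) and two matched interface vertices of Q_j
   would form a 4-cycle. *)

Set Implicit Arguments.
Unset Strict Implicit.
Unset Printing Implicit Defensive.

Section CardBigcup.
Variables (I T : finType) (B : I -> {set T}).

Lemma leq_card_bigcup : #|\bigcup_i B i| <= \sum_i #|B i|.
Proof.
elim/big_rec2: _ => [|i n U _ leUn]; first by rewrite cards0.
by rewrite (leq_trans (leq_card_setU _ _)) ?leq_add2l.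
Qed.

Lemma card_bigcup_disjoint :
  (forall i j, i != j -> [disjoint B i & B j]) ->
  #|\bigcup_i B i| = \sum_i #|B i|.
Proof.
move=> disjB.
have cardE (A : {set T}) : #|A| = \sum_x (x \in A : nat).
  by rewrite -sum1_card big_mkcond; apply: eq_bigr => x _; case: (x \in A).
rewrite cardE (eq_bigr _ (fun i _ => cardE (B i))) exchange_big.
apply: eq_bigr => x _; case: bigcupP => [[i _ xBi]|xnB].
  rewrite (bigD1 i) //= xBi big1 // => j ji.
  by rewrite (disjointFr (disjB i j _) xBi) // eq_sym.
by rewrite big1 // => i _; case: (boolP (x \in B i)) => // xBi; case: xnB; exists i.
Qed.

End CardBigcup.

Section InducedForest.
Variables (T : finType) (adj : rel T) (A : {set T}).
Hypothesis adj_sym : symmetric adj.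
Hypothesis forestA : induced_forest adj A.

Lemma forest_no_triangle x y z : x \in A -> y \in A -> z \in A ->
  uniq [:: x; y; z] -> adj x y -> adj y z -> adj z x -> False.
Proof.
move=> xA yA zA uxyz axy ayz azx; apply: forestA; exists [:: x; y; z].
by rewrite /= xA yA zA axy ayz azx.
Qed.

Lemma forest_no_square x y z w : x \in A -> y \in A -> z \in A -> w \in A ->
  uniq [:: x; y; z; w] -> adj x y -> adj y z -> adj z w -> adj w x -> False.
Proof.
move=> xA yA zA wA uxyzw axy ayz azw awx; apply: forestA; exists [:: x; y; z; w].
by rewrite /= xA yA zA wA axy ayz azw awx.
Qed.

Lemma forest_common_nbrs_adj x y (N : {set T}) : x \in A -> y \in A -> x != y ->
  adj x y -> x \notin N -> y \notin N -> {in N, forall v, adj x v && adj y v} ->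
  [disjoint N & A].
Proof.
move=> xA yA xy axy xN yN nbr; apply/pred0P => v /=; apply/negP => /andP[vN vA].
have /andP[axv ayv] := nbr v vN.
apply: (forest_no_triangle xA yA vA _ axy ayv); last by rewrite adj_sym.
rewrite /= !inE !negb_or xy andbT.
by apply/andP; split; [apply: contraNneq xN | apply: contraNneq yN] => ->.
Qed.

Lemma forest_common_nbrs x y (N : {set T}) : x \in A -> y \in A -> x != y ->
  x \notin N -> y \notin N -> {in N, forall v, adj x v && adj y v} ->
  #|N :&: A| <= 1.
Proof.
move=> xA yA xy xN yN nbr; apply/card_le1_eqP => v1 v2.
rewrite !inE => /andP[v1N v1A] /andP[v2N v2A]; apply/eqP/negPn/negP => v12.
have /andP[axv1 ayv1] := nbr v1 v1N; have /andP[axv2 ayv2] := nbr v2 v2N.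
apply: (forest_no_square xA v1A yA v2A _ axv1 _ ayv2); rewrite 1?adj_sym //.
have notN u v : u \notin N -> v \in N -> u != v by move=> uN vN; apply: contraNneq uN => ->.
rewrite /= !inE !negb_or xy (eq_sym v1 v2) v12 (notN x v1) ?(notN x v2) ?(notN y v2) //=.
by rewrite eq_sym (notN y v1).
Qed.

End InducedForest.

Lemma mem_cover (T : finType) (P : {set {set T}}) e x : e \in P -> x \in e -> x \in cover P.
Proof. by move=> eP xe; apply/bigcupP; exists e. Qed.

Lemma coverS (T : finType) (P Q : {set {set T}}) : P \subset Q -> cover P \subset cover Q.
Proof.
by move=> PQ; apply/bigcupsP => e eP; apply/subsetP => x; exact: mem_cover (subsetP PQ e eP).
Qed.

Definition edges_at (T : finType) (M : {set {set T}}) (x : T) : {set {set T}} :=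
  [set e in M | x \in e].

Section Matching.
Variables (T : finType) (adj : rel T) (M : {set {set T}}).
Hypothesis matchM : is_matching adj M.

Lemma matching_eq e1 e2 x : e1 \in M -> e2 \in M -> x \in e1 -> x \in e2 -> e1 = e2.
Proof.
move=> e1M e2M xe1 xe2; apply/eqP/negPn/negP => e12.
by have := disjointFr (matchM.2 _ _ e1M e2M e12) xe1; rewrite xe2.
Qed.

Lemma card_edges_at x : #|edges_at M x| <= (x \in cover M).
Proof.
case: (boolP (x \in cover M)) => [_|xnM].
  apply/card_le1_eqP => e1 e2; rewrite !inE => /andP[e1M xe1] /andP[e2M xe2].
  exact: matching_eq e2M e1M xe2 xe1.
rewrite leqn0 cards_eq0; apply/eqP/setP => e; rewrite !inE.
by apply/negP => /andP[eM xe]; case/negP: xnM; exact: mem_cover eM xe.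
Qed.

Lemma card_matching_meet (F : {set {set T}}) (N : {set T}) : F \subset M ->
  (forall e, e \in F -> exists2 v, v \in e & v \in N) -> #|F| <= #|N :&: cover F|.
Proof.
move=> FM meetN; have [->|[e0 /meetN[x0 _ _]]] := set_0Vmem F; first by rewrite cards0.
pose f e := odflt x0 [pick v in e :&: N].
have fP e : e \in F -> f e \in e :&: N.
  rewrite /f; case: pickP => [v //|noN /meetN[v ve vN]].
  by have := noN v; rewrite inE ve vN.
rewrite -(card_in_imset (f := f)) => [|e1 e2 e1F e2F f12]; last first.
  have /setIP[fe1 _] := fP e1 e1F; have /setIP[fe2 _] := fP e2 e2F.
  by apply: (matching_eq (subsetP FM _ e1F) (subsetP FM _ e2F) fe1); rewrite f12.
apply/subset_leq_card/subsetP => _ /imsetP[e eF ->].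
by have /setIP[fe fN] := fP e eF; rewrite inE fN (mem_cover eF fe).
Qed.

End Matching.

Arguments VX {n t C} _.
Arguments VI {n t C} _.
Arguments VU {n t C} _.
Arguments VW {n t C} _.
Arguments VU' {n t C} _.
Arguments VW' {n t C} _.
Arguments VP {n t C}.
Arguments VPi {n t C} _.

Section Construction.
Variables (c t : nat) (S : 'I_t -> {set {set 'I_(3 * c)}}).
Local Notation C := (bigC S).
Local Notation V := (vert t C).
Local Notation adj := (G_adj S).

Definition interface (j : csub C) : {set V} :=
  [set v | if v is VI z then (val z).1 == j else false].

Definition cross_edge (z : iface C) : {set V} := [set VI z; VX (val z).2].

Definition x_vertices : {set V} := [set VX a | a : 'I_(3 * c)].

Lemma G_adj_sym : symmetric adj.
Proof. by move=> x y; rewrite /G_adj orbC. Qed.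

Lemma G_adj_cases x y : adj x y ->
  [\/ exists j, VU j \in [set x; y] \/ VW j \in [set x; y],
      exists z, [set x; y] = cross_edge z,
      exists i z, [set x; y] = [set VPi i; VI z] /\ val (val z).1 \notin S i
    | VP \in [set x; y]].
Proof.
rewrite /G_adj /cross_edge.
case: x => [a|z|s|s|s|s||i]; case: y => [a'|z'|s'|s'|s'|s'||i'] //=; rewrite ?orbF.
all: try (move=> /eqP E; subst).
all: try by apply: Or44; first [apply: set21 | apply: set22].
all: try by apply: Or42; eexists; (reflexivity || apply: setUC).
all: try by apply: Or43; do 2 eexists; split; [(reflexivity || apply: setUC) | move/eqP: E].
all: apply: Or41; by first [exists s | exists s' | exists (val z).1 | exists (val z').1];
  first [left; apply: set21 | left; apply: set22 | right; apply: set21 | right; apply: set22].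
Qed.

Lemma G_adj_VP y : adj VP y -> exists q, y = VPi q.
Proof. by case: y => // q _; exists q. Qed.

Lemma G_adj_UW j : adj (VU j) (VW j).
Proof. by rewrite /G_adj /= eqxx. Qed.

Lemma G_adj_interface j v : v \in interface j -> adj (VU j) v && adj (VW j) v.
Proof. by rewrite inE; case: v => // z zj; rewrite /G_adj /= zj. Qed.

Lemma G_adj_VPi_interface i j v : val j \notin S i -> v \in interface j -> adj (VPi i) v.
Proof. by rewrite inE; case: v => // z jSi /eqP zj; rewrite /G_adj /= zj orbF. Qed.

Lemma card_interface j : (forall i, three_sets (S i)) -> #|interface j| <= 3.
Proof.
pose Z := [set z : iface C | (val z).1 == j].
have -> : interface j = VI @: Z.
  apply/setP => v; rewrite inE; case: v => [a|z|s|s|s|s||i] /=;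
    try by apply/esym/imsetP => -[].
  by apply/idP/imsetP => [zj|[z' + [->]]]; [exists z; rewrite ?inE | rewrite inE].
move=> S3; have /bigcupP[i _ /S3 card_j] := valP j.
apply: leq_trans (leq_imset_card _ _) _; rewrite -[X in _ <= X]card_j.
rewrite -(card_in_imset (f := fun z : iface C => (val z).2)) => [|z1 z2].
  apply/subset_leq_card/subsetP => d /imsetP[z]; rewrite inE => /eqP <- ->.
  exact: valP z.
rewrite !inE => /eqP z1j /eqP z2j z12; apply: val_inj.
by rewrite [val z1]surjective_pairing [val z2]surjective_pairing z1j z2j z12.
Qed.

Lemma card_x_vertices : #|x_vertices| = 3 * c.
Proof. by rewrite card_imset ?card_ord // => a b [->]. Qed.

Lemma mem_VI_cross_edge z z' : VI z \in cross_edge z' -> z = z'.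
Proof. by case/set2P => -[]. Qed.

Lemma mem_VX_cross_edge a z : VX a \in cross_edge z -> a = (val z).2.
Proof. by case/set2P => -[]. Qed.

End Construction.

Section AcyclicMatchingInG.
Variables (c t : nat) (S : 'I_t -> {set {set 'I_(3 * c)}}).
Hypothesis S3 : forall i, three_sets (S i).
Local Notation C := (bigC S).
Local Notation V := (vert t C).
Local Notation adj := (G_adj S).
Variable M : {set {set V}}.
Hypothesis matchM : is_matching adj M.
Hypothesis forestM : induced_forest adj (cover M).
Local Notation cov := (cover M).

Definition cross (j : csub C) : {set {set V}} :=
  [set e in M | [exists z : iface C, ((val z).1 == j) && (e == cross_edge z)]].

Definition pi_edges (j : csub C) : {set {set V}} :=
  [set e in M | [exists i, exists z : iface C,
     [&& (val z).1 == j, val j \notin S i & e == [set VPi i; VI z]]]].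

Definition gadget_edges (j : csub C) : {set {set V}} :=
  edges_at M (VU j) :|: edges_at M (VW j) :|: (cross j :|: pi_edges j).

Definition balanced (j : csub C) : bool :=
  (#|cross j| == 0) || (#|cross j| == 3) && ((VU j \in cov) || (VW j \in cov)).

Lemma crossP j e :
  reflect (e \in M /\ exists2 z : iface C, (val z).1 = j & e = cross_edge z) (e \in cross j).
Proof.
rewrite inE; apply: (iffP andP) => [[eM /existsP[z /andP[/eqP zj /eqP eE]]]|[eM [z zj eE]]].
  by split=> //; exists z.
by split=> //; apply/existsP; exists z; rewrite zj eE !eqxx.
Qed.

Lemma pi_edgesP j e :
  reflect (e \in M /\ exists i (z : iface C),
             [/\ (val z).1 = j, val j \notin S i & e = [set VPi i; VI z]])
          (e \in pi_edges j).
Proof.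
rewrite inE; apply: (iffP andP) => [[eM /existsP[i /existsP[z /and3P[/eqP zj jSi /eqP eE]]]]|].
  by split=> //; exists i, z.
by case=> eM [i [z [zj jSi eE]]]; split=> //; apply/existsP; exists i; apply/existsP; exists z;
  rewrite zj jSi eE !eqxx.
Qed.

Lemma cross_pi_edges_disjoint j : [disjoint cross j & pi_edges j].
Proof.
apply/pred0P => e /=; apply/negP => /andP[/crossP[_ [z _ ->]] /pi_edgesP[_ [i [z' [_ _ E]]]]].
by have : VX (val z).2 \in cross_edge z := set22 _ _; rewrite E => /set2P[].
Qed.

Lemma card_cross_pi_edges j : #|cross j| + #|pi_edges j| <= #|interface j :&: cov|.
Proof.
have /eqP <- : #|cross j :|: pi_edges j| == #|cross j| + #|pi_edges j|.
  by rewrite (leq_card_setU _ _).2 cross_pi_edges_disjoint.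
have FM : cross j :|: pi_edges j \subset M.
  by apply/subsetP => e /setUP[/crossP[]|/pi_edgesP[]].
apply: leq_trans (card_matching_meet matchM (N := interface j) FM _) _.
  move=> e /setUP[/crossP[_ [z zj ->]]|/pi_edgesP[_ [i [z [zj _ ->]]]]];
    by exists (VI z); rewrite ?set21 ?set22 // inE zj.
by apply: subset_leq_card; apply: setIS; exact: coverS.
Qed.

Lemma card_covered_interface_UW j :
  VU j \in cov -> VW j \in cov -> #|interface j :&: cov| = 0.
Proof.
move=> Uc Wc; apply/eqP; rewrite cards_eq0 setI_eq0.
apply: (forest_common_nbrs_adj (G_adj_sym (S := S)) forestM Uc Wc _ (G_adj_UW j));
  by [rewrite inE | apply/eqP; case | exact: G_adj_interface].
Qed.

Lemma card_covered_interface_VPi i j : VPi i \in cov -> val j \notin S i ->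
  (VU j \in cov) || (VW j \in cov) -> #|interface j :&: cov| <= 1.
Proof.
move=> Pc jSi /orP[] UWc; apply: (forest_common_nbrs (G_adj_sym (S := S)) forestM Pc UWc);
  try by [rewrite inE | apply/eqP; case].
- move=> v vj; have /andP[Uv _] := G_adj_interface vj.
  by rewrite (G_adj_VPi_interface jSi vj) Uv.
- move=> v vj; have /andP[_ Wv] := G_adj_interface vj.
  by rewrite (G_adj_VPi_interface jSi vj) Wv.
Qed.

Lemma card_covered_interface_two_VPi i1 i2 j : i1 != i2 -> VPi i1 \in cov -> VPi i2 \in cov ->
  val j \notin S i1 -> val j \notin S i2 -> #|interface j :&: cov| <= 1.
Proof.
move=> i12 P1c P2c jS1 jS2.
apply: (forest_common_nbrs (G_adj_sym (S := S)) forestM P1c P2c); try by rewrite inE.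
  by apply: contra_neq i12 => -[].
by move=> v vj; rewrite (G_adj_VPi_interface jS1 vj) (G_adj_VPi_interface jS2 vj).
Qed.

Lemma card_pi_edges j : #|pi_edges j| <= 1.
Proof.
rewrite leqNgt; apply/negP => pi2; have := card_cross_pi_edges j.
have [e1 [e2 [/pi_edgesP[e1M [i1 [z1 [_ jS1 E1]]]] /pi_edgesP[e2M [i2 [z2 [_ jS2 E2]]]] e12]]] :=
  card_gt1P pi2.
have Pe1 : VPi i1 \in e1 by rewrite E1 set21.
have Pe2 : VPi i2 \in e2 by rewrite E2 set21.
have i12 : i1 != i2.
  by apply: contra_neq e12 => i12; apply: (matching_eq matchM e1M e2M Pe1); rewrite i12.
have := card_covered_interface_two_VPi i12 (mem_cover e1M Pe1) (mem_cover e2M Pe2) jS1 jS2.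
lia.
Qed.

Lemma gadget_bound j : 3 * #|gadget_edges j| + ~~ balanced j <= 6 + 2 * #|cross j|.
Proof.
have edges : #|gadget_edges j| <= (VU j \in cov) + (VW j \in cov) + (#|cross j| + #|pi_edges j|).
  apply: leq_trans (leq_card_setU _ _) _; apply: leq_add.
    apply: leq_trans (leq_card_setU _ _) _.
    by apply: leq_add; apply: (card_edges_at matchM).
  by apply: leq_trans (leq_card_setU _ _) _.
have ch := card_cross_pi_edges j; have h1 := card_pi_edges j.
have i3 : #|interface j :&: cov| <= 3.
  exact: leq_trans (subset_leq_card (subsetIl _ _)) (card_interface j S3).
have uw := @card_covered_interface_UW j.
have piUW : (VU j \in cov) || (VW j \in cov) -> 0 < #|pi_edges j| -> #|interface j :&: cov| <= 1.
  move=> UWc /card_gt0P[e /pi_edgesP[eM [i [z [_ jSi E]]]]].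
  by apply: (card_covered_interface_VPi (mem_cover eM _) jSi UWc); rewrite E set21.
move: edges uw piUW; rewrite /balanced.
by case: (VU j \in cov); case: (VW j \in cov) => edges uw piUW;
  rewrite ?orbT ?orbF ?andbT ?andbF in piUW *; try have := uw isT isT; lia.
Qed.

Lemma matching_edge_classes e :
  e \in M -> e \in (\bigcup_j gadget_edges j) :|: edges_at M VP.
Proof.
move=> eM; have [x [y [axy Exy]]] := matchM.1 e eM.
have inG j : e \in gadget_edges j -> e \in (\bigcup_j gadget_edges j) :|: edges_at M VP.
  by move=> eG; apply/setUP; left; apply/bigcupP; exists j.
case: (G_adj_cases axy) => [[j UWe]|[z Ez]|[i [z [Ez jSi]]]|VPe].
- rewrite -Exy in UWe; apply: (inG j); rewrite /gadget_edges /edges_at !inE eM.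
  by case: UWe => ->; rewrite ?orbT.
- apply: (inG (val z).1); apply/setUP; right; apply/setUP; left.
  by apply/crossP; split=> //; exists z; rewrite ?Exy.
- apply: (inG (val z).1); apply/setUP; right; apply/setUP; right.
  by apply/pi_edgesP; split=> //; exists i, z; rewrite ?Exy.
- by apply/setUP; right; rewrite inE eM Exy.
Qed.

Lemma card_matching_le : #|M| <= \sum_j #|gadget_edges j| + (VP \in cov).
Proof.
have /subsetP/subset_leq_card/leq_trans -> // := matching_edge_classes.
apply: leq_trans (leq_card_setU _ _) _.
by apply: leq_add; [exact: leq_card_bigcup | exact: card_edges_at matchM VP].
Qed.

Lemma sum_card_cross :
  \sum_j #|cross j| <= #|x_vertices S :&: cover (\bigcup_j cross j)|.
Proof.
rewrite -card_bigcup_disjoint => [|j j' jj'].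
  apply: (card_matching_meet matchM (N := x_vertices S)).
    by apply/bigcupsP => j _; apply/subsetP => e /crossP[].
  move=> e /bigcupP[j _ /crossP[_ [z _ ->]]].
  by exists (VX (val z).2); [exact: set22 | exact: imset_f].
apply/pred0P => e /=; apply/negP => /andP[/crossP[_ [z zj ->]] /crossP[_ [z' z'j E]]].
have /mem_VI_cross_edge zz' : VI z \in cross_edge z' by rewrite -E set21.
by case/eqP: jj'; rewrite -zj -z'j zz'.
Qed.

Lemma large_matching_tight : ell S <= #|M| ->
  [/\ forall j, balanced j, VP \in cov & x_vertices S \subset cover (\bigcup_j cross j)].
Proof.
rewrite /ell => large.
have gadgets : 3 * \sum_j #|gadget_edges j| + \sum_j ~~ balanced j
               <= 6 * #|C| + 2 * \sum_j #|cross j|.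
  rewrite big_distrr -big_split /=.
  apply: (@leq_trans (\sum_j (6 + 2 * #|cross j|))).
    by apply: leq_sum => j _; exact: gadget_bound.
  by rewrite big_split sum_nat_const card_sig big_distrr /= mulnC.
have xs : #|x_vertices S :&: cover (\bigcup_j cross j)| <= 3 * c.
  by rewrite -[X in _ <= X](card_x_vertices S); apply/subset_leq_card/subsetIl.
have Mle := card_matching_le; have crossX := sum_card_cross.
have VPb : (VP \in cov : nat) <= 1 by case: (VP \in cov).
have [unbal [VPc xfull]] : \sum_j ~~ balanced j = 0 /\ (VP \in cov : nat) = 1 /\
  #|x_vertices S :&: cover (\bigcup_j cross j)| = 3 * c by lia.
split.
- by move=> j; move/eqP: unbal; rewrite sum_nat_eq0 => /forallP /(_ j); rewrite eqb0 negbK.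
- by case: (VP \in cov) VPc.
- by apply/setIidPl/eqP; rewrite eqEcard subsetIl xfull (card_x_vertices S) /=.
Qed.

Lemma full_cross_edges j : #|cross j| = 3 ->
  forall d (dj : d \in val j), cross_edge (Sub (j, d) dj : iface C) \in M.
Proof.
move=> k3 d dj.
have FM : cross j \subset M by apply/subsetP => e /crossP[].
have hit : #|cross j| <= #|interface j :&: cover (cross j)|.
  apply: (card_matching_meet matchM FM) => e /crossP[_ [z zj ->]].
  by exists (VI z); [exact: set21 | rewrite inE zj].
have covI : interface j \subset cover (cross j).
  apply/setIidPl/eqP; rewrite eqEcard subsetIl andTb.
  by have := card_interface j S3; lia.
have /(subsetP covI)/bigcupP[e /crossP[eM [z _ eE]]] : VI (Sub (j, d) dj : iface C) \in interface j.
  by rewrite inE /=.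
by rewrite eE => /mem_VI_cross_edge ->; rewrite -eE.
Qed.

Lemma full_cross_unique j z : #|cross j| = 3 -> cross_edge z \in M ->
  (val z).2 \in val j -> (val z).1 = j.
Proof.
move=> k3 zM dj; have z'M := full_cross_edges k3 dj.
have E := matching_eq matchM zM z'M (set22 _ _) (set22 _ _).
have : VI (Sub (j, (val z).2) dj : iface C) \in cross_edge z by rewrite E set21.
by move/mem_VI_cross_edge <-.
Qed.

Lemma covered_VPi : VP \in cov -> exists q, VPi q \in cov.
Proof.
case/bigcupP => e eM; have [x [y [axy Exy]]] := matchM.1 e eM.
rewrite Exy => /set2P[] E; rewrite -E in axy.
- have [q Eq] := G_adj_VP axy; exists q.
  by apply: (mem_cover eM); rewrite Exy Eq set22.
- rewrite G_adj_sym in axy; have [q Eq] := G_adj_VP axy; exists q.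
  by apply: (mem_cover eM); rewrite Exy Eq set21.
Qed.

Lemma full_gadget_mem q j : VPi q \in cov -> balanced j -> #|cross j| = 3 -> val j \in S q.
Proof.
move=> Pq; rewrite /balanced => + k3; rewrite k3 /= => UWc.
apply/negPn/negP => jnS.
have := card_covered_interface_VPi Pq jnS UWc; have := card_cross_pi_edges j.
lia.
Qed.

Lemma large_matching_exact_cover : ell S <= #|M| -> exists q, x3c_yes (S q).
Proof.
case/large_matching_tight => bal VPc xcov.
have [q Pq] := covered_VPi VPc.
pose full := [set j | #|cross j| == 3].
exists q, [set val j | j in full]; split.
  apply/subsetP => s /imsetP[j]; rewrite inE => /eqP k3 ->.
  exact: full_gadget_mem Pq (bal j) k3.
move=> a.
have /(subsetP xcov)/bigcupP[e /bigcupP[j0 _ e0] ae] : VX a \in x_vertices S.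
  by apply/imsetP; exists a.
have /crossP[eM [z zj eE]] := e0.
rewrite eE in ae eM; have az := mem_VX_cross_edge ae.
have k3 : #|cross j0| = 3.
  have pos : 0 < #|cross j0| by apply/card_gt0P; exists e.
  by have := bal j0; rewrite /balanced eqn0Ngt pos => /andP[/eqP].
apply/eqP/cards1P; exists (val j0); apply/setP => s; rewrite !inE.
apply/andP/eqP => [[/imsetP[j]] | ->].
  rewrite inE => /eqP kj3 -> aj.
  by rewrite -(full_cross_unique kj3 eM) ?zj // -az.
split; first by apply/imsetP; exists j0; rewrite ?inE ?k3.
by rewrite az -zj; exact: valP z.
Qed.

End AcyclicMatchingInG.

Theorem lemma16 (c t : nat) (S : 'I_t -> {set {set 'I_(3 * c)}}) :
  (forall i, three_sets (S i)) ->
  (forall i j, #|S i| = #|S j|) ->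
  injective S ->
  (exists M : {set {set vert t (bigC S)}},
      acyclic_matching (G_adj S) M /\ ell S <= #|M|) ->
  exists q : 'I_t, x3c_yes (S q).
Proof.
move=> S3 _ _ [M [[matchM forestM] large]].
exact (large_matching_exact_cover S3 matchM forestM large).
Qed.
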